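(* Let $n, r, s, \ell$ be positive integers with $r+s+\ell \leq n$. Fix any matrix $\mathbf{B} \in \mathbb{Z}_2^{(n-\ell)\times \ell}$ and any full column-rank matrix $\mathbf{C} \in \mathbb{Z}_2^{(n-\ell)\times(n-r-\ell)}$, let $\mathbf{A} := \begin{bmatrix} \mathbf{I}_\ell & \mathbf{0} \\ \mathbf{B} & \mathbf{C}\end{bmatrix} \in \mathbb{Z}_2^{n\times(n-r)}$, and let $S_j := \mathrm{ColSpan}(\mathbf{A}^{[j:n-r]})^\perp$ for $j\in[\ell+1]$. Then the following two distributions over tuples of subspaces are identical: 1. Sample $s$ uniformly random linearly independent vectors $\mathbf{v}_1,\ldots,\mathbf{v}_s \in \mathbb{Z}_2^n$ conditioned on $\mathrm{span}\{\mathbf{v}_1,\ldots,\mathbf{v}_s\}\cap S_{\ell+1} = \{0\}$, and output $(T_1,\ldots,T_{\ell+1})$ with $T_j := \mathrm{span}\{S_j, \mathbf{v}_1,\ldots,\mathbf{v}_s\}$. 2. Sample a uniformly random full-rank $\mathbf{M} \in \mathbb{Z}_2^{(n-r-\ell)\times(n-r-\ell)}$ and a uniformly random $\mathbf{M}' \in \mathbb{Z}_2^{(n-r-\ell)\times \ell}$, set $\overline{\mathbf{A}} := \mathbf{A}\cdot\begin{bmatrix}\mathbf{I}_\ell & \mathbf{0}\\ \mathbf{M}' & \mathbf{M}\end{bmatrix}$, and output $(T_1,\ldots,T_{\ell+1})$ with $T_j := \mathrm{ColSpan}\left(\begin{bmatrix}\overline{\mathbf{A}}^{[j:\ell]} &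 \overline{\mathbf{A}}^{[\ell+s+1:n-r]}\end{bmatrix}\right)^\perp$ (for $j=\ell+1$ the first block is empty).
   Context: All linear algebra is over $\mathbb{Z}_2$. For a matrix $\mathbf{M}$, $\mathbf{M}^{[a:b]}$ denotes the submatrix consisting of columns $a$ through $b$ (inclusive; empty if $a>b$). $\mathrm{ColSpan}$ is the column span, and for a subspace $S$, $S^\perp := \{\mathbf{w}: \mathbf{w}^T\mathbf{s}=0\ \forall \mathbf{s}\in S\}$. $[k]=\{1,\dots,k\}$. *)

(* Vectors of Z_2^n are row
   vectors 'rV['F_2]_n (mxalgebra convention); a subspace is represented by a
   matrix whose row space is the subspace, compared with (_ == _)%MS. *)
From HB Require Import structures.
From mathcomp Require Import all_boot all_order all_algebra.
Unset Printing Implicit Defensive.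
Import GRing.Theory.
Local Open Scope ring_scope.

(* The block matrix has type
   'M_(l + (n-l), l + (n-r-l)); under l + r <= n these sizes are n and n-r,
   and conform_mx returns the block matrix itself (the default 0 is only used
   when the sizes disagree, which never happens under the hypotheses). *)
Definition Amx (n r l : nat) (B : 'M['F_2]_(n - l, l))
    (C : 'M['F_2]_(n - l, n - r - l)) : 'M['F_2]_(n, n - r) :=
  conform_mx 0 (block_mx (1%:M : 'M['F_2]_l) 0 B C).

Definition Gmx (n r l : nat) (M' : 'M['F_2]_(n - r - l, l))
    (M : 'M['F_2]_(n - r - l)) : 'M['F_2]_(n - r) :=
  conform_mx 1%:M (block_mx (1%:M : 'M['F_2]_l) 0 M' M).

(* ColSpan of the submatrix of A made of the columns whose 1-based index k
   satisfies P k: a matrix whose row space is spanned by those columns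
   (column k of A becomes row k; the other rows are zero). *)
Definition ColSpanSel (m k : nat) (A : 'M['F_2]_(m, k)) (P : pred nat)
    : 'M['F_2]_(k, m) :=
  \matrix_(j < k, i < m) (if P j.+1 then A i j else 0).

Definition ColSpanRange (m k : nat) (A : 'M['F_2]_(m, k)) (a b : nat) :=
  ColSpanSel m k A (fun x => (a <= x <= b)%N).

Definition perpmx (m k : nat) (W : 'M['F_2]_(k, m)) : 'M['F_2]_m :=
  kermx W^T.

(* S_j for j in [l+1], indexed by j0 : 'I_(l.+1) with j = j0 + 1. *)
Definition Sj (n r l : nat) (A : 'M['F_2]_(n, n - r)) (j0 : 'I_l.+1)
    : 'M['F_2]_n :=
  perpmx n (n - r) (ColSpanRange n (n - r) A j0.+1 (n - r)).

Definition good1 (n r s l : nat) (A : 'M['F_2]_(n, n - r))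
    (V : 'M['F_2]_(s, n)) : bool :=
  row_free V && (V :&: Sj n r l A ord_max == (0 : 'M['F_2]_n))%MS.

Definition out1 (n r s l : nat) (A : 'M['F_2]_(n, n - r))
    (V : 'M['F_2]_(s, n)) (j0 : 'I_l.+1) : 'M['F_2]_n :=
  (Sj n r l A j0 + V)%MS.

Definition good2 (n r l : nat)
    (MM : 'M['F_2]_(n - r - l) * 'M['F_2]_(n - r - l, l)) : bool :=
  MM.1 \in unitmx.

Definition out2 (n r s l : nat) (A : 'M['F_2]_(n, n - r))
    (MM : 'M['F_2]_(n - r - l) * 'M['F_2]_(n - r - l, l)) (j0 : 'I_l.+1)
    : 'M['F_2]_n :=
  let Abar := A *m Gmx n r l MM.2 MM.1 in
  perpmx n (n - r) (ColSpanSel n (n - r) Abar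
            (fun x => (j0.+1 <= x <= l) || (l + s + 1 <= x <= n - r))%N).

Definition uprob (T : finType) (D E : pred T) : rat :=
  (#|[set x | D x && E x]|%:R / #|[set x | D x]|%:R)%R.

From mathcomp Require Import all_boot all_order all_algebra zify.
Set Implicit Arguments. Unset Strict Implicit. Unset Printing Implicit Defensive.
Import GRing.Theory.
Local Open Scope ring_scope.

(* Vectors are rows, and a vector is described by its image under A.  Both
   distributions are pushed forward from the uniform distribution on the
   s x (n-r) matrices R whose last n-r-l columns are linearly independent, and
   in both the output depends on R alone: T_j is the annihilator of A K_j, where
   K_j is the space of vectors supported on the coordinates >= j and orthogonal
   to the rows of R.  In distribution 1, R := V A; its fibres are translates of
   {X | X A = 0} because A has full column rank, and the conditioning on V is
   exactly the independence condition on R.  In distribution 2, with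
   G := [[I, 0], [M', M]], R is made of the rows l+1 .. l+s of G^-1; these G
   form a group whose left multiplications permute the fibres transitively,
   since every admissible R completes to some G^-1, so again all fibres have
   the same size. *)

Section SelectionMatrix.
Context {F : fieldType} {N : nat}.
Implicit Types P Q : pred 'I_N.

Definition sel_mx P : 'M[F]_N := diag_mx (\row_j (P j)%:R).

Lemma sel_mxE P i j : sel_mx P i j = ((i == j) && P i)%:R.
Proof. by rewrite !mxE; case: (i == j); case: (P i). Qed.

Lemma eq_sel_mx P Q : P =1 Q -> sel_mx P = sel_mx Q.
Proof. by move=> eqPQ; apply/matrixP => i j; rewrite !sel_mxE eqPQ. Qed.

Lemma tr_sel_mx P : (sel_mx P)^T = sel_mx P.
Proof. exact: tr_diag_mx. Qed.

Lemma mul_sel_mx P Q : sel_mx P *m sel_mx Q = sel_mx (fun k => P k && Q k).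
Proof.
apply/matrixP => i j; rewrite mul_diag_mx !mxE.
by case: (i == j); case: (P i); case: (Q i); rewrite /= ?mul1r ?mul0r ?mulr0.
Qed.

Lemma sel_mx_pred0 P : (forall k, P k = false) -> sel_mx P = 0.
Proof. by move=> P0; apply/matrixP => i j; rewrite sel_mxE P0 andbF mxE. Qed.

Lemma sel_mx_predT P : (forall k, P k) -> sel_mx P = 1%:M.
Proof. by move=> PT; apply/matrixP => i j; rewrite sel_mxE PT andbT mxE. Qed.

Lemma mul_sel_mx0 P Q : (forall k, P k && Q k = false) -> sel_mx P *m sel_mx Q = 0.
Proof. by move=> PQ0; rewrite mul_sel_mx sel_mx_pred0. Qed.

Lemma add_sel_mx P Q : (forall k, P k && Q k = false) ->
  sel_mx P + sel_mx Q = sel_mx (fun k => P k || Q k).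
Proof.
move=> PQ0; apply/matrixP => i j; rewrite mxE !sel_mxE.
case: (i == j) => /=; last by rewrite addr0.
by move: (PQ0 i); case: (P i); case: (Q i); rewrite //= ?addr0 ?add0r.
Qed.

Lemma sel_mx_id m P (X : 'M[F]_(m, N)) : (X <= sel_mx P)%MS -> X *m sel_mx P = X.
Proof.
case/submxP => D ->; rewrite -mulmxA mul_sel_mx.
by congr (_ *m _); apply: eq_sel_mx => k; rewrite andbb.
Qed.

Lemma pid_mx_sel j : pid_mx j = sel_mx (fun k => k < j)%N.
Proof. by apply/matrixP => a b; rewrite sel_mxE mxE. Qed.

Lemma copid_mx_sel j : copid_mx j = sel_mx (fun k => j <= k)%N.
Proof.
have pid_copid : sel_mx (fun k => k < j)%N + sel_mx (fun k => j <= k)%N = 1%:M.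
  rewrite add_sel_mx => [|k]; last by apply/negP; lia.
  by apply: sel_mx_predT => k /=; lia.
by rewrite /copid_mx pid_mx_sel -pid_copid addrAC subrr add0r.
Qed.

Lemma mul_pid_copid_mx j k : (j <= k)%N -> pid_mx j *m copid_mx k = 0 :> 'M[F]_N.
Proof. by move=> jk; rewrite pid_mx_sel copid_mx_sel mul_sel_mx0 // => i; apply/negP; lia. Qed.

Lemma mul_copid_pid_mx j k : (j <= k)%N -> copid_mx k *m pid_mx j = 0 :> 'M[F]_N.
Proof. by move=> jk; rewrite pid_mx_sel copid_mx_sel mul_sel_mx0 // => i; apply/negP; lia. Qed.

Lemma mul_pid_mx_sq j k : (pid_mx j : 'M[F]_N) *m (pid_mx k : 'M[F]_N) = pid_mx (minn j k).
Proof. by rewrite mul_pid_mx pid_mx_minv. Qed.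

Lemma mulmx_copid_eq0 m (X : 'M[F]_(m, N)) j : X *m copid_mx j = 0 -> X *m pid_mx j = X.
Proof. by move/eqP; rewrite /copid_mx mulmxBr mulmx1 subr_eq0 => /eqP <-. Qed.

Lemma mulmx_pid_eq0 m (X : 'M[F]_(m, N)) j : X *m (pid_mx j : 'M_N) = 0 -> X *m copid_mx j = X.
Proof. by rewrite /copid_mx mulmxBr mulmx1 => ->; rewrite subr0. Qed.

End SelectionMatrix.

Section Slice.
Context {F : fieldType}.
Variables (N l s : nat).
Hypothesis lsN : (l + s <= N)%N.

Definition slice_mx : 'M[F]_(s, N) := \matrix_(i, j) ((j : nat) == (l + i)%N)%:R.

Lemma mul_slice_tr : slice_mx *m slice_mx^T = 1%:M.
Proof.
apply/matrixP => i i'; rewrite !mxE.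
have li_lt : (l + i < N)%N by apply: leq_trans lsN; rewrite ltn_add2l.
rewrite (bigD1 (Ordinal li_lt)) //= big1 ?addr0 => [|k /eqP neq_k].
  by rewrite !mxE /= eqxx mul1r eqn_add2l.
rewrite !mxE; suff -> : (k == l + i :> nat)%N = false by rewrite mul0r.
by apply/negP => /eqP eq_k; apply/neq_k/val_inj.
Qed.

Lemma mul_tr_slice :
  slice_mx^T *m slice_mx = sel_mx (fun k : 'I_N => l <= k < l + s)%N.
Proof.
apply/matrixP => k k'; rewrite sel_mxE !mxE.
case: (boolP (l <= k < l + s)%N) => [/andP[lk kls] | out_k]; last first.
  rewrite andbF big1 // => i _; rewrite !mxE.
  suff -> : (k == l + i :> nat)%N = false by rewrite mul0r.
  by apply/negP => /eqP eq_k; move: out_k; rewrite eq_k leq_addr ltn_add2l ltn_ord.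
have kl_lt : (k - l < s)%N by rewrite ltn_subLR.
rewrite (bigD1 (Ordinal kl_lt)) //= big1 ?addr0 => [|i /eqP neq_i]; last first.
  rewrite !mxE; suff -> : (k == l + i :> nat)%N = false by rewrite mul0r.
  by apply/negP => /eqP eq_k; apply/neq_i/val_inj; rewrite /= eq_k addKn.
by rewrite !mxE /= subnKC // eqxx mul1r andbT eq_sym.
Qed.

Lemma mul_slice_window :
  slice_mx *m sel_mx (fun k : 'I_N => l <= k < l + s)%N = slice_mx.
Proof. by rewrite -mul_tr_slice mulmxA mul_slice_tr mul1mx. Qed.

Lemma mul_slice_sel (P : pred 'I_N) :
  (forall k : 'I_N, l <= k < l + s -> P k)%N -> slice_mx *m sel_mx P = slice_mx.
Proof.
move=> window_P; rewrite -{1}mul_slice_window -mulmxA mul_sel_mx -[RHS]mul_slice_window.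
congr (_ *m _); apply: eq_sel_mx => k /=.
by apply/idP/idP => [/andP[] | wk] //; rewrite wk window_P.
Qed.

Lemma mul_slice_sel0 (P : pred 'I_N) :
  (forall k : 'I_N, l <= k < l + s -> P k = false)%N -> slice_mx *m sel_mx P = 0.
Proof.
move=> window_P; rewrite -mul_slice_window -mulmxA mul_sel_mx0 ?mulmx0 // => k.
by case: (boolP (l <= k < l + s)%N) => // /window_P ->.
Qed.

Lemma mul_slice_pid : slice_mx *m (pid_mx l : 'M_N) = 0.
Proof. by rewrite pid_mx_sel mul_slice_sel0 // => k /= /andP[lk _]; rewrite ltnNge lk. Qed.

Lemma mul_slice_pid_tail : slice_mx *m (pid_mx (l + s) : 'M_N) = slice_mx.
Proof. by rewrite pid_mx_sel mul_slice_sel // => k /= /andP[]. Qed.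

Lemma mul_slice_copid_tail : slice_mx *m copid_mx (l + s) = 0.
Proof. by rewrite copid_mx_sel mul_slice_sel0 // => k /= /andP[_ kls]; rewrite leqNgt kls. Qed.

End Slice.

Lemma row_free_mul_cap (F : fieldType) m n p (V : 'M[F]_(m, n)) (B : 'M[F]_(n, p)) :
  row_free (V *m B) = row_free V && (V :&: kermx B == (0 : 'M_n))%MS.
Proof.
rewrite sub0mx andbT submx0 -mxrank_eq0 /row_free.
have := mxrank_mul_ker V B; have := rank_leq_row V.
by move=> le_rk eq_rk; apply/eqP/andP => [rk | [/eqP rk /eqP rk0]]; [split; apply/eqP|]; lia.
Qed.

Lemma unitmx_fill_rows (F : fieldType) N k (X : 'M[F]_N) :
  (k <= N)%N -> pid_mx k *m X = X -> (k <= \rank X)%N ->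
  X + copid_mx k *m row_ebase X \in unitmx.
Proof.
move=> kN pidX rkX.
have rk_eq : \rank X = k.
  apply/eqP; rewrite eqn_leq rkX andbT -pidX.
  by apply: leq_trans (mxrankM_maxl _ _) _; rewrite rank_pid_mx.
(* The complement X^C of mxalgebra lives in the last N - k rows. *)
have XC : (X^C)%MS = copid_mx k *m row_ebase X by rewrite /complmx rk_eq.
set Q := X + _; rewrite -row_full_unit -sub1mx.
apply: submx_trans (submx_full _ (addsmx_compl_full X)) _.
rewrite addsmx_sub; apply/andP; split.
  have -> : X = pid_mx k *m Q.
    by rewrite mulmxDr pidX mulmxA mul_pid_mx_copid ?mul0mx ?addr0.
  exact: submxMl.
have copidX : copid_mx k *m X = 0 by rewrite -pidX mulmxA mul_copid_mx_pid ?mul0mx.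
have -> : (X^C)%MS = copid_mx k *m Q by rewrite XC mulmxDr copidX add0r mulmxA copid_mx_id.
exact: submxMl.
Qed.

Section TopIdentity.
Context {F : fieldType} {N : nat}.
Variable l : nat.
Implicit Types G H : 'M[F]_N.

(* The group of the matrices [[I_l, 0], [M', M]] with M invertible. *)
Definition unit_top_id G := (G \in unitmx) && ((pid_mx l : 'M_N) *m G == pid_mx l).

Lemma unit_top_id1 : unit_top_id 1%:M.
Proof. by rewrite /unit_top_id unitmx1 mulmx1 eqxx. Qed.

Lemma unit_top_id_inv G : unit_top_id G -> unit_top_id (invmx G).
Proof.
case/andP => uG /eqP pidG.
by rewrite /unit_top_id unitmx_inv uG -{1}pidG mulmxK ?eqxx.
Qed.

Lemma unit_top_id_mul G H : unit_top_id G -> unit_top_id H -> unit_top_id (G *m H).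
Proof.
case/andP => uG /eqP pidG /andP[uH /eqP pidH].
by rewrite /unit_top_id unitmx_mul uG uH mulmxA pidG pidH eqxx.
Qed.

Lemma unit_top_id_pid j G : unit_top_id G -> (j <= l)%N -> (pid_mx j : 'M_N) *m G = pid_mx j.
Proof.
case/andP => _ /eqP pidG jl.
by rewrite -[in LHS](minn_idPl jl) -mul_pid_mx_sq -mulmxA pidG mul_pid_mx_sq (minn_idPl jl).
Qed.

End TopIdentity.

Section SliceCoordinates.
Context {F : fieldType}.
Variables (N l s : nat).
Hypothesis lsN : (l + s <= N)%N.
Local Notation slice := (slice_mx N l s : 'M[F]_(s, N)).
Implicit Types (R : 'M[F]_(s, N)) (G Q : 'M[F]_N).

Definition tail_free (R : 'M[F]_(s, N)) := row_free (R *m copid_mx l).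

Definition inv_slice (G : 'M[F]_N) : 'M[F]_(s, N) := slice *m invmx G.

(* The (0-based) columns of Abar whose span is annihilated in T_j. *)
Definition keep_mx (j : nat) : 'M[F]_N :=
  sel_mx (fun k : 'I_N => (j <= k < l) || (l + s <= k))%N.

Lemma tr_keep_mx j : (keep_mx j)^T = keep_mx j.
Proof. exact: tr_sel_mx. Qed.

Lemma mul_slice_keep j : slice *m keep_mx j = 0.
Proof. by apply: (mul_slice_sel0 lsN) => k /= /andP[lk kls]; apply/negP; lia. Qed.

Lemma mul_pid_keep j : (j <= l)%N -> (pid_mx j : 'M_N) *m keep_mx j = 0.
Proof. by move=> jl; rewrite pid_mx_sel mul_sel_mx0 // => k; apply/negP; lia. Qed.

Lemma mul_keep_pid j : (j <= l)%N -> keep_mx j *m (pid_mx j : 'M_N) = 0.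
Proof. by move=> jl; rewrite pid_mx_sel mul_sel_mx0 // => k; apply/negP; lia. Qed.

Lemma add_pid_slice_keep j : (j <= l)%N -> pid_mx j + slice^T *m slice + keep_mx j = 1%:M.
Proof.
move=> jl; rewrite mul_tr_slice pid_mx_sel !add_sel_mx => [|k|k]; try by apply/negP; lia.
by apply: sel_mx_predT => k /=; lia.
Qed.

Lemma inv_slice_eq G R : G \in unitmx -> (inv_slice G == R) = (R *m G == slice).
Proof. by move=> uG; rewrite /inv_slice; apply/eqP/eqP => [<- | <-]; rewrite ?mulmxKV ?mulmxK. Qed.

Lemma tail_free_inv_slice G : unit_top_id l G -> tail_free (inv_slice G).
Proof.
move=> topG; have [uG _] := andP topG.
apply: inj_row_free => v; rewrite !mulmxA => /mulmx_copid_eq0 x_pid.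
set x := v *m slice *m invmx G in x_pid.
have vE : v *m slice = x *m pid_mx l.
  by rewrite -(unit_top_id_pid topG (leqnn l)) mulmxA x_pid /x mulmxKV.
rewrite -[v]mulmx1 -(mul_slice_tr lsN) mulmxA vE -mulmxA -tr_pid_mx -trmx_mul.
by rewrite (mul_slice_pid lsN) trmx0 mulmx0.
Qed.

Lemma mul_pid_tr_slice j : (pid_mx j : 'M_N) *m slice^T = (slice *m pid_mx j)^T.
Proof. by rewrite trmx_mul tr_pid_mx. Qed.

Lemma mul_pid_top_slice R : (pid_mx l : 'M_N) *m (pid_mx l + slice^T *m R) = pid_mx l.
Proof.
by rewrite mulmxDr mul_pid_mx_sq minnn mulmxA mul_pid_tr_slice mul_slice_pid // trmx0 mul0mx addr0.
Qed.

Lemma rank_top_slice R : tail_free R -> (l + s <= \rank ((pid_mx l : 'M_N) + slice^T *m R)%R)%N.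
Proof.
move=> freeR; set P0 := (X in \rank X).
have P0_copid : P0 *m copid_mx l = slice^T *m (R *m copid_mx l).
  by rewrite /P0 mulmxDl mul_pid_copid_mx // add0r mulmxA.
have rk_tail : (s <= \rank (slice^T *m (R *m copid_mx l)))%N.
  rewrite -{1}(eqP freeR) -{1}[R *m _]mul1mx -(mul_slice_tr lsN) -mulmxA.
  exact: mxrankM_maxr.
have pid_sub : ((pid_mx l : 'M_N) <= P0 :&: kermx (copid_mx l))%MS.
  rewrite sub_capmx sub_kermx mul_pid_copid_mx // eqxx andbT -{1}(mul_pid_top_slice R).
  exact: submxMl.
have := mxrank_mul_ker P0 (copid_mx l); rewrite P0_copid.
by have := mxrankS pid_sub; rewrite rank_pid_mx //; lia.
Qed.

Lemma exists_unit_top_id_slice R : tail_free R -> exists2 Q, unit_top_id l Q & slice *m Q = R.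
Proof.
move=> freeR; set P0 := pid_mx l + slice^T *m R.
have pid_P0 : pid_mx (l + s) *m P0 = P0.
  rewrite /P0 mulmxDr mul_pid_mx_sq (minn_idPr (leq_addr s l)) mulmxA mul_pid_tr_slice.
  by rewrite mul_slice_pid_tail.
have unitQ := unitmx_fill_rows lsN pid_P0 (rank_top_slice freeR).
exists (P0 + copid_mx (l + s) *m row_ebase P0).
  rewrite /unit_top_id unitQ mulmxDr mul_pid_top_slice mulmxA mul_pid_copid_mx ?leq_addr //.
  by rewrite mul0mx addr0 eqxx.
rewrite !mulmxDr mul_slice_pid // add0r !mulmxA mul_slice_tr // mul_slice_copid_tail //.
by rewrite mul1mx mul0mx addr0.
Qed.

Variables (n : nat) (A : 'M[F]_(n, N)).

Definition out_mx (j : nat) R : 'M[F]_n := kermx (A *m (copid_mx j :&: kermx R^T)%MS^T).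

Lemma kermx_mul_tr_eqmx m1 m2 (X : 'M[F]_(m1, N)) (Y : 'M[F]_(m2, N)) :
  (X :=: Y)%MS -> (kermx (A *m X^T) :=: kermx (A *m Y^T))%MS.
Proof.
have sub_ker m3 m4 (X' : 'M[F]_(m3, N)) (Y' : 'M[F]_(m4, N)) :
    (X' <= Y')%MS -> (kermx (A *m Y'^T) <= kermx (A *m X'^T))%MS.
  case/submxP => D ->; apply/sub_kermxP.
  by rewrite trmx_mul (mulmxA A) mulmxA mulmx_ker mul0mx.
by move=> eqXY; apply/eqmxP; rewrite /eqmx !sub_ker // eqXY ?submx_refl.
Qed.

Lemma keep_mul_tr_eqmx G j : unit_top_id l G -> (j <= l)%N ->
  (keep_mx j *m G^T :=: copid_mx j :&: kermx (inv_slice G)^T)%MS.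
Proof.
move=> topG jl; have [uG _] := andP topG.
have pidG := unit_top_id_pid topG jl.
have pidGV := unit_top_id_pid (unit_top_id_inv topG) jl.
apply/eqmxP/andP; split.
  rewrite sub_capmx; apply/andP; split.
    have keepG_pid : keep_mx j *m G^T *m (pid_mx j : 'M_N) = 0.
      by rewrite -mulmxA -tr_pid_mx -trmx_mul pidG tr_pid_mx mul_keep_pid.
    by rewrite -(mulmx_pid_eq0 keepG_pid) submxMl.
  apply/sub_kermxP; rewrite /inv_slice trmx_mul trmx_inv mulmxA mulmxK ?unitmx_tr //.
  by rewrite -tr_keep_mx -trmx_mul mul_slice_keep trmx0.
set K := (_ :&: _)%MS.
have K_copid : K *m copid_mx j = K.
  by rewrite copid_mx_sel sel_mx_id // -copid_mx_sel capmxSl.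
have K_ker : K *m (inv_slice G)^T = 0 by apply/sub_kermxP; exact: capmxSr.
set Y := K *m (invmx G)^T.
have Y_pid : Y *m (pid_mx j : 'M_N) = 0.
  rewrite /Y -mulmxA -tr_pid_mx -trmx_mul pidGV tr_pid_mx -K_copid -mulmxA.
  by rewrite mul_copid_pid_mx // mulmx0.
have Y_slice : Y *m slice^T = 0 by rewrite /Y -mulmxA -trmx_mul K_ker.
have Y_keep : Y *m keep_mx j = Y.
  rewrite -[Y in RHS]mulmx1 -(add_pid_slice_keep jl) !mulmxDr Y_pid mulmxA Y_slice.
  by rewrite mul0mx !add0r.
have -> : K = Y *m G^T by rewrite /Y trmx_inv mulmxKV ?unitmx_tr.
by rewrite -Y_keep -mulmxA submxMl.
Qed.

Lemma out_mx_inv_slice G j : unit_top_id l G -> (j <= l)%N ->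
  (kermx (A *m G *m keep_mx j) :=: out_mx j (inv_slice G))%MS.
Proof.
move=> topG jl; rewrite -[G in A *m G]trmxK -tr_keep_mx -mulmxA -trmx_mul.
exact: kermx_mul_tr_eqmx (keep_mul_tr_eqmx topG jl).
Qed.

Lemma adds_kermx_copid_eqmx (V : 'M[F]_(s, n)) Q j :
  unit_top_id l Q -> slice *m Q = V *m A -> (j <= l)%N ->
  (kermx (A *m copid_mx j) + V :=: kermx (A *m invmx Q *m keep_mx j))%MS.
Proof.
(* In the coordinates x |-> x A Q^-1 the rows of V become the unit vectors
   e_l, ..., e_(l+s-1), exactly the ones discarded by keep_mx. *)
move=> topQ sliceQ jl; have [uQ _] := andP topQ.
have pidQ := unit_top_id_pid topQ jl.
have pidQV := unit_top_id_pid (unit_top_id_inv topQ) jl.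
apply/eqmxP/andP; split.
  rewrite addsmx_sub; apply/andP; split; apply/sub_kermxP; last first.
    by rewrite !mulmxA -sliceQ mulmxK // mul_slice_keep.
  set W := kermx _; have WA_copid : W *m A *m copid_mx j = 0 by rewrite -mulmxA mulmx_ker.
  rewrite !mulmxA -(mulmx_copid_eq0 WA_copid) -(mulmxA _ (pid_mx j)) pidQV.
  by rewrite -mulmxA mul_pid_keep // mulmx0.
set W := kermx _; set Z := W *m A *m invmx Q.
have Z_keep : Z *m keep_mx j = 0.
  by have := mulmx_ker (A *m invmx Q *m keep_mx j); rewrite !mulmxA.
have Z_split : Z = Z *m (pid_mx j : 'M_N) + Z *m slice^T *m slice.
  by rewrite -[Z in LHS]mulmx1 -(add_pid_slice_keep jl) !mulmxDr Z_keep addr0 mulmxA.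
have WA : W *m A = Z *m (pid_mx j : 'M_N) + Z *m slice^T *m V *m A.
  rewrite -[W *m A](mulmxKV uQ) -/Z {1}Z_split mulmxDl -(mulmxA Z (pid_mx j)) pidQ.
  by congr (_ + _); rewrite -!mulmxA sliceQ.
rewrite -[W](subrK (Z *m slice^T *m V)) addmx_sub_adds ?submxMl //.
apply/sub_kermxP; rewrite mulmxA mulmxBl WA addrK -mulmxA mul_pid_copid_mx //.
by rewrite mulmx0.
Qed.

Lemma adds_kermx_out_mx (V : 'M[F]_(s, n)) j : tail_free (V *m A) -> (j <= l)%N ->
  (kermx (A *m copid_mx j) + V :=: out_mx j (V *m A))%MS.
Proof.
move=> freeVA jl; have [Q topQ sliceQ] := exists_unit_top_id_slice freeVA.
apply: eqmx_trans (adds_kermx_copid_eqmx topQ sliceQ jl) _.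
have -> : V *m A = inv_slice (invmx Q).
  by rewrite /inv_slice invmxK sliceQ.
exact: out_mx_inv_slice (unit_top_id_inv topQ) jl.
Qed.

End SliceCoordinates.

Arguments tail_free {F N} l {s} R.

Section UniformProbability.
Variables T T' : finType.

Lemma uprob_congr (D1 D2 E1 E2 : pred T) :
  D1 =1 D2 -> (forall x, D1 x -> E1 x = E2 x) -> uprob T D1 E1 = uprob T D2 E2.
Proof.
move=> eqD eqE; rewrite /uprob; congr (_%:R / _%:R); apply: eq_card => x; rewrite !inE -eqD //.
by case Dx: (D1 x); rewrite //= eqE.
Qed.

Lemma uprob_fiber (f : T -> T') (D : pred T) (D' E' : pred T') c :
  (forall x, D x -> D' (f x)) -> (0 < c)%N ->
  (forall y, D' y -> #|[set x | D x && (f x == y)]| = c) ->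
  uprob T D (fun x => E' (f x)) = uprob T' D' E'.
Proof.
move=> fD c_gt0 fiber.
have card_pre E : #|[set x | D x && E (f x)]| = (c * #|[set y | D' y && E y]|)%N.
  rewrite -!sum1_card (partition_big f (fun y => D' y && E y)) /=; last first.
    by move=> x; rewrite inE => /andP[/fD -> ->].
  rewrite big_distrr /=; apply: eq_big => [y | y /andP[D'y Ey]]; first by rewrite inE.
  rewrite muln1 -(fiber y D'y) -sum1_card; apply: eq_bigl => x; rewrite !inE.
  by case: eqP => [-> | _]; rewrite ?Ey ?andbT ?andbF.
have card_D : #|[set x | D x]| = (c * #|[set y | D' y]|)%N.
  transitivity #|[set x | D x && predT (f x)]|.
    by apply: eq_card => x; rewrite !inE andbT.
  by rewrite card_pre; congr (c * _)%N; apply: eq_card => y; rewrite !inE andbT.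
rewrite /uprob card_pre card_D !natrM -mulf_div divff ?mul1r //.
by rewrite Num.Theory.pnatr_eq0 -lt0n.
Qed.

Lemma uprob_bij (f : T -> T') (D : pred T) (D' E' : pred T') :
  injective f -> (forall x, D x -> D' (f x)) -> (forall y, D' y -> exists2 x, D x & f x = y) ->
  uprob T D (fun x => E' (f x)) = uprob T' D' E'.
Proof.
move=> f_inj fD f_onto; apply: (uprob_fiber _ fD (ltn0Sn 0)) => y /f_onto[x Dx <-].
rewrite -(cards1 x); apply: eq_card => x'; rewrite !inE.
by apply/andP/eqP => [[_ /eqP /f_inj] | ->] //; rewrite Dx eqxx.
Qed.

End UniformProbability.

Section LowerBlockMatrices.
Context {F : fieldType}.
Variables (l d N : nat).
Hypothesis ldN : (l + d)%N = N.

Definition top_id_mx (MM : 'M[F]_d * 'M[F]_(d, l)) : 'M[F]_N :=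
  conform_mx 1%:M (block_mx 1%:M 0 MM.2 MM.1).

Lemma unit_top_id_mx MM : unit_top_id l (top_id_mx MM) = (MM.1 \in unitmx).
Proof.
rewrite /top_id_mx; case: N / ldN; rewrite conform_mx_id /unit_top_id.
rewrite unitmxE det_lblock det1 mul1r -unitmxE pid_mx_block mulmx_block.
by rewrite !mul1mx !mul0mx !addr0 eqxx andbT.
Qed.

Lemma top_id_mx_inj : injective top_id_mx.
Proof.
rewrite /top_id_mx; case: N / ldN => -[M1 M1'] [M2 M2'].
by rewrite !conform_mx_id => /eq_block_mx[_ _ /= -> ->].
Qed.

Lemma top_id_mx_onto G : unit_top_id l G -> exists2 MM, MM.1 \in unitmx & top_id_mx MM = G.
Proof.
move=> topG; have [MM defG] : exists MM, top_id_mx MM = G.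
  move: topG; rewrite /top_id_mx; case: N / ldN in G * => /andP[_ /eqP].
  rewrite -[G]submxK pid_mx_block mulmx_block !mul1mx !mul0mx !addr0 => /eq_block_mx[-> -> _ _].
  by exists (drsubmx G, dlsubmx G); rewrite conform_mx_id.
by exists MM; rewrite // -unit_top_id_mx defG.
Qed.

End LowerBlockMatrices.

Arguments top_id_mx {F l d} N MM.

Section SubspaceDistributions.
Context {F : finFieldType}.
Variables (n N l s : nat) (A : 'M[F]_(n, N)) (T : 'I_l.+1 -> 'M[F]_n).
Hypotheses (A_full : row_full A) (lsN : (l + s <= N)%N).
Local Notation slice := (slice_mx N l s : 'M[F]_(s, N)).
Local Notation out_event :=
  (fun R : 'M[F]_(s, N) => [forall j : 'I_l.+1, (out_mx A j R == T j)%MS]).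

Lemma uprob_vectors_tail_free :
  uprob _ (fun V : 'M[F]_(s, n) => row_free V && (V :&: kermx (A *m copid_mx l) == (0 : 'M_n))%MS)
          (fun V => [forall j : 'I_l.+1, (kermx (A *m copid_mx j) + V == T j)%MS])
  = uprob _ (tail_free l) out_event.
Proof.
rewrite (@uprob_congr _ _ _ _ (fun V => out_event (V *m A)) (frefl _)); last first.
  move=> V; rewrite -row_free_mul_cap mulmxA => freeVA; apply: eq_forallb => j.
  by rewrite !(adds_kermx_out_mx lsN freeVA (ltn_ord j)).
have [L LA] := row_fullP A_full.
set c := #|[set X : 'M[F]_(s, n) | X *m A == 0]|.
apply: (@uprob_fiber _ _ _ _ _ _ c) => [V | | R freeR].
- by rewrite -row_free_mul_cap mulmxA.
- by rewrite card_gt0; apply/set0Pn; exists 0; rewrite inE mul0mx.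
have -> : [set V | (row_free V && (V :&: kermx (A *m copid_mx l) == (0 : 'M_n))%MS)
                     && (V *m A == R)]
    = (fun X => X + R *m L) @: [set X : 'M[F]_(s, n) | X *m A == 0].
  apply/setP => V; rewrite inE -row_free_mul_cap; apply/andP/imsetP.
    case=> _ /eqP VA; exists (V - R *m L); last by rewrite subrK.
    by rewrite inE mulmxBl VA -mulmxA LA mulmx1 subrr.
  case=> X; rewrite inE => /eqP XA ->.
  have XRA : (X + R *m L) *m A = R by rewrite mulmxDl XA add0r -mulmxA LA mulmx1.
  by rewrite mulmxA XRA eqxx.
by rewrite card_imset //; apply: addIr.
Qed.

Lemma uprob_unit_top_id_tail_free :
  uprob _ (unit_top_id l)
          (fun G => [forall j : 'I_l.+1, (kermx (A *m G *m keep_mx N l s j) == T j)%MS])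
  = uprob _ (tail_free l) out_event.
Proof.
rewrite (@uprob_congr _ _ _ _ (fun G => out_event (inv_slice l s G)) (frefl _)); last first.
  move=> G topG; apply: eq_forallb => j.
  by rewrite !(out_mx_inv_slice lsN A topG (ltn_ord j)).
set c := #|[set G | unit_top_id l G && (inv_slice l s G == slice)]|.
apply: (@uprob_fiber _ _ _ _ _ _ c) => [G | | R freeR].
- exact: tail_free_inv_slice.
- rewrite card_gt0; apply/set0Pn; exists 1%:M.
  by rewrite inE unit_top_id1 /inv_slice invmx1 mulmx1 eqxx.
have [Q topQ sliceQ] := exists_unit_top_id_slice lsN freeR.
have [uQ _] := andP topQ.
rewrite -(card_imset _ (can_inj (mulKmx uQ))); apply: eq_card => G.
rewrite inE; apply/imsetP/andP => [[G' + ->] | [topG]].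
  rewrite inE => /andP[topG' RG']; have [uG' _] := andP topG'.
  split; first by rewrite unit_top_id_mul.
  by rewrite inv_slice_eq ?unitmx_mul ?uQ // mulmxA sliceQ -inv_slice_eq.
have [uG _] := andP topG; rewrite inv_slice_eq // => /eqP sliceG.
exists (invmx Q *m G); last by rewrite mulKVmx.
rewrite inE unit_top_id_mul ?unit_top_id_inv //= inv_slice_eq ?unitmx_mul ?unitmx_inv ?uQ //.
by rewrite -sliceQ mulmxA mulmxK // sliceG.
Qed.

Lemma uprob_top_id_mx_tail_free d : (l + d)%N = N ->
  uprob _ (fun MM : 'M[F]_d * 'M[F]_(d, l) => MM.1 \in unitmx)
          (fun MM => [forall j : 'I_l.+1,
                        (kermx (A *m top_id_mx N MM *m keep_mx N l s j) == T j)%MS])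
  = uprob _ (tail_free l) out_event.
Proof.
move=> ldN; rewrite -uprob_unit_top_id_tail_free.
apply: uprob_bij (top_id_mx_inj ldN) _ (top_id_mx_onto ldN) => MM.
by rewrite unit_top_id_mx.
Qed.

End SubspaceDistributions.

Lemma row_full_conform_block (F : fieldType) (l m d n N : nat)
    (B : 'M[F]_(m, l)) (C : 'M[F]_(m, d)) :
  (l + m)%N = n -> (l + d)%N = N -> \rank C = d ->
  row_full (conform_mx (0 : 'M[F]_(n, N)) (block_mx 1%:M 0 B C)).
Proof.
move=> lmn ldN rkC; case: n / lmn; case: N / ldN; rewrite conform_mx_id.
have /row_fullP[L LC] : row_full C by rewrite /row_full rkC.
apply/row_fullP; exists (block_mx 1%:M 0 (- (L *m B)) L).
rewrite mulmx_block !mul1mx !mul0mx !addr0 mulmx0 add0r LC mulNmx mulmx1 addNr.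
by rewrite -scalar_mx_block.
Qed.

Lemma tr_ColSpanSel m k (A : 'M['F_2]_(m, k)) (P : pred nat) :
  (ColSpanSel m k A P)^T = A *m sel_mx (fun j : 'I_k => P j.+1).
Proof.
apply/matrixP => i j; rewrite /sel_mx mul_mx_diag !mxE.
by case: (P j.+1); rewrite ?mulr1 ?mulr0.
Qed.

Lemma Sj_kermx n r l (A : 'M['F_2]_(n, n - r)) (j : 'I_l.+1) :
  Sj n r l A j = kermx (A *m copid_mx j).
Proof.
rewrite /Sj /perpmx /ColSpanRange tr_ColSpanSel copid_mx_sel; congr (kermx (A *m _)).
by apply: eq_sel_mx => k /=; have := ltn_ord k; lia.
Qed.

Lemma out2_kermx n r s l (A : 'M['F_2]_(n, n - r)) MM (j : 'I_l.+1) :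
  out2 n r s l A MM j = kermx (A *m top_id_mx (n - r) MM *m keep_mx (n - r) l s j).
Proof.
rewrite /out2 /perpmx tr_ColSpanSel; congr (kermx (_ *m _)).
by apply: eq_sel_mx => k /=; have := ltn_ord k; lia.
Qed.

Theorem mainTheorem2 (n r s l : nat)
    (B : 'M['F_2]_(n - l, l)) (C : 'M['F_2]_(n - l, n - r - l)) :
  (0 < n)%N -> (0 < r)%N -> (0 < s)%N -> (0 < l)%N -> (r + s + l <= n)%N ->
  \rank C = (n - r - l)%N ->
  forall T : 'I_l.+1 -> 'M['F_2]_n,
    uprob _ (good1 n r s l (Amx n r l B C))
          (fun V => [forall j, (out1 n r s l (Amx n r l B C) V j == T j)%MS])
    = uprob _ (good2 n r l)
          (fun MM => [forall j, (out2 n r s l (Amx n r l B C) MM j == T j)%MS]).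
Proof.
move=> _ _ _ _ rsl_n rkC T; set A := Amx n r l B C.
have lsN : (l + s <= n - r)%N by lia.
have ldN : (l + (n - r - l))%N = (n - r)%N by lia.
have A_full : row_full A by apply: row_full_conform_block rkC; lia.
transitivity
  (uprob _ (tail_free l)
     (fun R : 'M['F_2]_(s, n - r) => [forall j : 'I_l.+1, (out_mx A j R == T j)%MS])).
  rewrite -(uprob_vectors_tail_free T A_full lsN); apply: uprob_congr => [V | V _].
    by rewrite /good1 Sj_kermx.
  by apply: eq_forallb => j; rewrite /out1 Sj_kermx.
rewrite -(uprob_top_id_mx_tail_free A T lsN ldN); apply: uprob_congr => [MM | MM _].
  by [].
by apply: eq_forallb => j; rewrite out2_kermx.
Qed.
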